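(* Let $X$ be a square-free word of length $4$ and $Y$ a square-free word of length $6$. Then there exist a length-2 factor $a_1a_2$ of $X$ and a length-2 factor $b_1b_2$ of $Y$ (with $a_1,a_2,b_1,b_2$ letters) such that $a_1\notin\{b_1,b_2\}$ and $b_2\notin\{a_1,a_2\}$.
   Context: A word is square-free if it has no factor of the form $UU$ with $U$ nonempty. A factor is a contiguous subword. *)

From mathcomp Require Import all_boot.
Set Implicit Arguments. Unset Strict Implicit. Unset Printing Implicit Defensive.

Definition square_free (T : eqType) (w : seq T) : Prop :=
  forall U : seq T, U != [::] -> ~~ infix (U ++ U) w.

From mathcomp Require Import all_boot.
From Stdlib Require Import Classical.

(* Suppose no factor ab of X is separated from a factor xy of Y, i.e. always
   a = x, a = y or b = y, and write X = pqrs with p != q != r.  If r = p (or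
   s = q), X contains both ab and ba for some a != b, which forces every letter
   of Y after the first into {a, b}; but square-free words over two letters
   have length at most 3.  Otherwise p, q, r are distinct and blocking by pq,
   qr and rs forces every factor of Y to be one of pr, rq, qp, so Y follows
   the cycle p -> r -> q -> p, has period 3, and is a square. *)

Set Implicit Arguments.
Unset Strict Implicit.
Unset Printing Implicit Defensive.

Section Words.
Variable T : eqType.
Implicit Types (a b c : T) (w A B U : seq T).

Lemma square_free_square A U B : U != [::] -> ~ square_free (A ++ (U ++ U) ++ B).
Proof. by move=> U0 /(_ U U0); rewrite infix_infix. Qed.

Lemma square_free_infix U w : infix U w -> square_free w -> square_free U.
Proof. by move=> Uw sfw V V0; apply: contra (sfw V V0) => /infix_trans; apply. Qed.

Lemma square_free_adj A a b B : square_free (A ++ a :: b :: B) -> a != b.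
Proof. by move=> sfw; apply/eqP=> ab; subst; exact: (@square_free_square A [:: b] B). Qed.

Lemma square_free_two_letters a b w :
  {subset w <= [:: a; b]} -> square_free w -> size w <= 3.
Proof.
case: w => [|x1 [|x2 [|x3 [|x4 t]]]] // sub sfw; exfalso.
have /and4P[] : [&& x1 \in [:: a; b], x2 \in [:: a; b], x3 \in [:: a; b] & x4 \in [:: a; b]].
  by rewrite !sub ?inE ?eqxx ?orbT.
have n12 := square_free_adj (A := [::]) sfw.
have n23 := square_free_adj (A := [:: x1]) sfw.
have n34 := square_free_adj (A := [:: x1; x2]) sfw.
rewrite !inE => /orP[]/eqP E1 /orP[]/eqP E2 /orP[]/eqP E3 /orP[]/eqP E4; subst;
  rewrite ?eqxx // in n12 n23 n34; exact: (@square_free_square [::] [:: _; _] t isT sfw).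
Qed.

Definition cycle3 a b c : rel T := fun x y => (x, y) \in [:: (a, b); (b, c); (c, a)].

Lemma cycle3_iter3 a b c x y z u : uniq [:: a; b; c] ->
  cycle3 a b c x y -> cycle3 a b c y z -> cycle3 a b c z u -> u = x.
Proof.
rewrite /cycle3 /= !inE !xpair_eqE !negb_or => /and3P[/andP[ab ac] bc _].
by do 3!case/or3P=> /andP[/eqP ? /eqP ?]; subst; rewrite ?eqxx in ab ac bc.
Qed.

Lemma cycle3_not_square_free a b c w : uniq [:: a; b; c] -> 6 <= size w ->
  (forall x y, infix [:: x; y] w -> cycle3 a b c x y) -> ~ square_free w.
Proof.
case: w => [|y1 [|y2 [|y3 [|y4 [|y5 [|y6 t]]]]]] // abc _ step.
have step_at A x y B : A ++ [:: x; y] ++ B = [:: y1, y2, y3, y4, y5, y6 & t] ->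
    cycle3 a b c x y.
  by move=> E; apply: step; rewrite -E infix_infix.
have y41 := cycle3_iter3 abc (step_at [::] _ _ _ erefl)
  (step_at [:: y1] _ _ _ erefl) (step_at [:: y1; y2] _ _ _ erefl).
have y52 := cycle3_iter3 abc (step_at [:: y1] _ _ _ erefl)
  (step_at [:: y1; y2] _ _ _ erefl) (step_at [:: y1; y2; y3] _ _ _ erefl).
have y63 := cycle3_iter3 abc (step_at [:: y1; y2] _ _ _ erefl)
  (step_at [:: y1; y2; y3] _ _ _ erefl) (step_at [:: y1; y2; y3; y4] _ _ _ erefl).
by rewrite y41 y52 y63; apply: (@square_free_square [::] [:: y1; y2; y3] t).
Qed.

Lemma mem_behead_infix x w : x \in behead w -> exists y, infix [:: y; x] w.
Proof.
elim: w => // y w IHw; case: w IHw => // z w IHw.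
rewrite [behead _]/= inE => /orP[/eqP->|/IHw[y' yx]].
  by exists y; apply: (prefix_infix [:: y; z]).
by exists y'; exact: infix_trans yx (infix_cons _ _).
Qed.

Lemma square_free_behead_two_letters a b w :
  (forall x y, infix [:: x; y] w -> y \in [:: a; b]) -> square_free w -> size w <= 4.
Proof.
case: w => // y w ab sfw; apply: (@square_free_two_letters a b).
  by move=> x /(@mem_behead_infix _ (y :: w))[z /ab].
exact: square_free_infix (infix_cons _ _) sfw.
Qed.

Definition separated a1 a2 b1 b2 := (a1 \notin [:: b1; b2]) && (b2 \notin [:: a1; a2]).

Lemma not_separated2 a b x y : a != b ->
  ~~ separated a b x y -> ~~ separated b a x y -> y \in [:: a; b].
Proof.
rewrite /separated !negb_and !negbK !inE -!orbA => ab.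
by do 2!case/or4P=> /eqP ?; subst; rewrite ?eqxx ?orbT in ab *.
Qed.

Lemma not_separated3 p q r s x y : uniq [:: p; r; q] -> s != q ->
  ~~ separated p q x y -> ~~ separated q r x y -> ~~ separated r s x y ->
  cycle3 p r q x y.
Proof.
rewrite /separated /cycle3 /= !negb_and !negbK !inE !xpair_eqE !negb_or -!orbA.
case/and3P=> /andP[pr pq] rq _ sq.
by do 3!case/or4P=> /eqP ?; subst; rewrite ?eqxx ?orbT in pr pq rq sq *.
Qed.

End Words.

Theorem mainTheorem8 (T : eqType) (X Y : seq T) :
  size X = 4 -> size Y = 6 -> square_free X -> square_free Y ->
  exists a1 a2 b1 b2 : T,
    [/\ infix [:: a1; a2] X, infix [:: b1; b2] Y,
        a1 \notin [:: b1; b2] & b2 \notin [:: a1; a2]].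
Proof.
move=> sizeX sizeY sfX sfY; apply: NNPP => no_sep.
have {no_sep}blocked a b x y : infix [:: a; b] X -> infix [:: x; y] Y -> ~~ separated a b x y.
  by move=> abX xyY; apply/negP=> /andP[ax yb]; apply: no_sep; exists a, b, x, y.
have two_letters a b : a != b -> infix [:: a; b] X -> infix [:: b; a] X -> False.
  move=> ab abX baX; suff: size Y <= 4 by rewrite sizeY.
  apply: (square_free_behead_two_letters _ sfY) => x y xyY.
  exact: not_separated2 ab (blocked _ _ _ _ abX xyY) (blocked _ _ _ _ baX xyY).
case: X sizeX sfX blocked two_letters => [|p [|q [|r [|s []]]]] // _ sfX blocked two_letters.
have pq := square_free_adj (A := [::]) sfX.
have qr := square_free_adj (A := [:: p]) sfX.
have [rp|rp] := eqVneq r p.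
  by apply: (two_letters p q pq (prefix_infix _ _)); rewrite rp (infix_infix [:: p] _ [:: s]).
have [sq|sq] := eqVneq s q.
  apply: (two_letters q r qr (infix_infix [:: p] _ [:: s])).
  by rewrite sq (infix_infix [:: p; q] _ [::]).
have prq : uniq [:: p; r; q] by rewrite /= !inE !negb_or pq (eq_sym p) rp (eq_sym r) qr.
apply: (cycle3_not_square_free prq _ _ sfY); first by rewrite sizeY.
move=> x y xyY; apply: (not_separated3 prq sq); apply: blocked xyY.
- exact: prefix_infix.
- exact: (infix_infix [:: p] _ [:: s]).
- exact: (infix_infix [:: p; q] _ [::]).
Qed.
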